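(* Let $k$ be a field of characteristic not $2$ and $n$ a $3$-fold Pfister form on an $8$-dimensional $k$-space $V$. The map $\mathfrak G:\mathfrak{Tri}^*(n)\to\mathfrak{Aut}(n)$, defined on objects by $\boldsymbol\alpha\mapsto(\boldsymbol\alpha,\boldsymbol\alpha^2)$ and on morphisms by $[h]\mapsto[h]$, is a full and faithful functor which is injective on objects. Moreover, the image of $\mathfrak G$ is a full subcategory of $\mathfrak{Tri}(n)$.
   Context: $\mathrm{GO}(n)$ is the group of similarities of $(V,n)$; $\mathrm{GO}^+(n)$ the subgroup of proper similarities (those whose induced automorphism of the even Clifford algebra $C_0(V,n)$ is trivial on its centre). $\mathrm{PGO}(n)=\mathrm{GO}(n)/k^*$, $\mathrm{PGO}^+(n)=\mathrm{GO}^+(n)/k^*$, $[h]$ the class of $h$. $\mathbf{PGO}(n)$ is the affine group scheme over $k$ assigning to each commutative associative unital $k$-algebra $A$ the group of $A$-algebra automorphisms of $A\otimes_k\mathrm{End}_k(V)$ commuting with the extension of the adjoint involution of the polar form $b_n$; $\mathbf{PGO}^+(n)$ is its identity component; $k$-points are identified with $\mathrm{PGO}(n)$, $\mathrm{PGO}^+(n)$ via $[h]\mapsto(x\mapsto hxh^{-1})$. Automorphisms of $\mathbf{PGO}^+(n)$ defined over $k$ are natural transformations from $\mathbf{PGO}^+(n)$ to itself whose components are group automorphisms. For $[h]\in\mathrm{PGO}(n)$, $\boldsymbol\kappa_{[h]}$ is the automorphism of $\mathbf{PGO}^+(n)$ given at each $A$ by conjugation by the image of $[h]$ in $\mathbf{PGO}(n)(A)$.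 An automorphism is inner if it equals $\boldsymbol\kappa_{[g]}$ for some $[g]\in\mathrm{PGO}^+(n)$, outer otherwise; it is weakly inner if it equals $\boldsymbol\kappa_{[h]}$ for some $h\in\mathrm{GO}(n)$ and strongly outer otherwise; $\mathbf{Inn}^*$ is the subgroup of weakly inner automorphisms. A trialitarian automorphism is an outer automorphism of $\mathbf{PGO}^+(n)$ defined over $k$ of order three. $\mathfrak{Tri}^*(n)$ is the groupoid whose objects are the trialitarian automorphisms, with morphisms $\boldsymbol\alpha\to\boldsymbol\beta$ the elements $[h]\in\mathrm{PGO}(n)$ with $\boldsymbol\kappa_{[h]}\boldsymbol\alpha\boldsymbol\kappa_{[h]}^{-1}=\boldsymbol\beta$. $\mathfrak{Aut}(n)$ is the groupoid whose objects are pairs of automorphisms of $\mathbf{PGO}^+(n)$ defined over $k$ and whose morphisms $(\boldsymbol\alpha_1,\boldsymbol\alpha_2)\to(\boldsymbol\beta_1,\boldsymbol\beta_2)$ are the $[h]\in\mathrm{PGO}(n)$ with $\boldsymbol\kappa_{[h]}\boldsymbol\alpha_r\boldsymbol\kappa_{[h]}^{-1}=\boldsymbol\beta_r$, $r=1,2$. $\mathfrak{Tri}(n)$ is the full subcategory of $\mathfrak{Aut}(n)$ whose objects are the trialitarian pairs, i.e. pairs of strongly outer automorphisms lying in different left cosets of $\mathbf{Inn}^*$. *)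

From HB Require Import structures.
From mathcomp Require Import all_boot all_order all_algebra.
Set Implicit Arguments. Unset Strict Implicit. Unset Printing Implicit Defensive.
Import Order.TTheory GRing.Theory Num.Theory.
Local Open Scope ring_scope.

(* V = k^8 (column vectors); a quadratic form n on V is given (char k <> 2)
   by a symmetric matrix S with n(x) = x^T S x; its polar form b_n has
   Gram matrix S + S^T. *)

Section Defs.
Variable k : fieldType.

(* Diagonal entries of the 3-fold Pfister form <<a,b,c>> = <1,-a>(x)<1,-b>(x)<1,-c>. *)
Definition pfister_entry (a b c : k) (i : 'I_8) : k :=
  (if odd i then - a else 1) * (if odd i./2 then - b else 1)
  * (if odd (i./2)./2 then - c else 1).

Definition is_3fold_pfister (S : 'M[k]_8) : Prop :=
  S^T = S /\
  exists (a b c : k) (P : 'M[k]_8),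
    [/\ a != 0, b != 0, c != 0, P \in unitmx &
        S = P^T *m diag_mx (\row_i pfister_entry a b c i) *m P].

Definition similitude (S : 'M[k]_8) (h : 'M[k]_8) : Prop :=
  h \in unitmx /\ exists mu : k, h^T *m S *m h = mu *: S.

(* Proper similarities GO^+(n): for 8-dimensional V, the automorphism of
   C_0(V,n) induced by h acts on the centre via z |-> (det h / mu^4) z,
   so h is proper iff det h = mu(h)^4. *)
Definition proper_similitude (S : 'M[k]_8) (h : 'M[k]_8) : Prop :=
  h \in unitmx /\ exists mu : k, h^T *m S *m h = mu *: S /\ \det h = mu ^+ 4.

Definition same_class (h h' : 'M[k]_8) : Prop :=
  exists c : k, c != 0 /\ h' = c *: h.

(* Adjoint involution of b_n, extended to A (x) End(V) = M_8(A). *)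
Definition adj_inv {R : comNzRingType} (Binv B : 'M[R]_8) (x : 'M[R]_8)
  : 'M[R]_8 := Binv *m x^T *m B.

Definition polarA (S : 'M[k]_8) (A : comAlgType k) : 'M[A]_8 :=
  map_mx (in_alg A) (S + S^T).
Definition polarInvA (S : 'M[k]_8) (A : comAlgType k) : 'M[A]_8 :=
  map_mx (in_alg A) (invmx (S + S^T)).

Definition base_change {R R' : comNzRingType} (f : R -> R')
    (phi : 'M[R]_8 -> 'M[R]_8) (x : 'M[R']_8) : 'M[R']_8 :=
  \sum_(i < 8) \sum_(j < 8) x i j *: map_mx f (phi (delta_mx i j)).

(* phi in PGO(n)(A): A-algebra automorphism of M_8(A) commuting with the
   adjoint involution. *)
Definition PGO_pt (S : 'M[k]_8) (A : comAlgType k) (phi : 'M[A]_8 -> 'M[A]_8)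
  : Prop :=
  [/\ (forall x y, phi (x + y) = phi x + phi y) /\
        (forall (a : A) x, phi (a *: x) = a *: phi x),
      (forall x y, phi (x *m y) = phi x *m phi y),
      phi 1%:M = 1%:M,
      bijective phi &
      (forall x, phi (adj_inv (polarInvA S A) (polarA S A) x) = adj_inv (polarInvA S A) (polarA S A) (phi x))].

(* phi in PGO^+(n)(A) (identity component, an open and closed subscheme):
   at every point of Spec A, i.e. after base change along every k-algebra
   map f : A -> F into a field F, phi becomes Int(g) for a proper similitude g
   of n_F. *)
Definition PGOplus_pt (S : 'M[k]_8) (A : comAlgType k)
    (phi : 'M[A]_8 -> 'M[A]_8) : Prop :=
  PGO_pt S phi /\
  forall (F : fieldType) (j : {rmorphism k -> F}) (f : {rmorphism A -> F}),
    (forall c : k, f (c%:A) = j c) ->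
    exists (g : 'M[F]_8) (mu : F),
      [/\ g \in unitmx,
          g^T *m map_mx j S *m g = mu *: map_mx j S,
          \det g = mu ^+ 4 &
          forall x, base_change f phi x = g *m x *m invmx g].

(* Raw families of maps on points; automorphisms of PGO^+(n) are such
   families satisfying is_aut. *)
Definition trans := forall A : comAlgType k,
  ('M[A]_8 -> 'M[A]_8) -> ('M[A]_8 -> 'M[A]_8).

Definition is_aut (S : 'M[k]_8) (al : trans) : Prop :=
  [/\ (forall A phi, PGOplus_pt S phi -> PGOplus_pt S (al A phi)),
      (forall A phi psi, PGOplus_pt S phi -> PGOplus_pt S psi ->
          al A (phi \o psi) = al A phi \o al A psi),
      (forall A phi psi, PGOplus_pt S phi -> PGOplus_pt S psi ->
          al A phi = al A psi -> phi = psi),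
      (forall A psi, PGOplus_pt S psi ->
          exists phi, PGOplus_pt S phi /\ al A phi = psi) &
      (forall (A A' : comAlgType k) (f : {rmorphism A -> A'}),
          (forall c : k, f (c%:A) = c%:A) ->
          forall phi, PGOplus_pt S phi ->
          al A' (base_change f phi) = base_change f (al A phi))].

Definition teq (S : 'M[k]_8) (al be : trans) : Prop :=
  forall A phi, PGOplus_pt S phi -> al A phi = be A phi.

Definition tcomp (al be : trans) : trans := fun A phi => al A (be A phi).
Definition tid : trans := fun A phi => phi.

Definition kappa (h : 'M[k]_8) : trans := fun A phi x =>
  map_mx (in_alg A) h *m phi (map_mx (in_alg A) (invmx h) *m x
     *m map_mx (in_alg A) h) *m map_mx (in_alg A) (invmx h).

Definition tconj (h : 'M[k]_8) (al : trans) : trans :=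
  tcomp (kappa h) (tcomp al (kappa (invmx h))).

Definition inner (S : 'M[k]_8) (al : trans) : Prop :=
  exists g, proper_similitude S g /\ teq S al (kappa g).
Definition weakly_inner (S : 'M[k]_8) (al : trans) : Prop :=
  exists h, similitude S h /\ teq S al (kappa h).
Definition strongly_outer (S : 'M[k]_8) (al : trans) : Prop :=
  ~ weakly_inner S al.

Definition trialitarian (S : 'M[k]_8) (al : trans) : Prop :=
  [/\ is_aut S al, ~ inner S al,
      teq S (tcomp al (tcomp al al)) tid & ~ teq S al tid].

Definition trialitarian_pair (S : 'M[k]_8) (al1 al2 : trans) : Prop :=
  [/\ is_aut S al1, is_aut S al2, strongly_outer S al1, strongly_outer S al2 &
      ~ (exists h, similitude S h /\ teq S al2 (tcomp al1 (kappa h)))].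

Definition hom_Tri_star (S : 'M[k]_8) (al be : trans) (h : 'M[k]_8) : Prop :=
  similitude S h /\ teq S (tconj h al) be.

Definition hom_Aut (S : 'M[k]_8) (al : trans * trans) (be : trans * trans)
    (h : 'M[k]_8) : Prop :=
  [/\ similitude S h, teq S (tconj h al.1) be.1 & teq S (tconj h al.2) be.2].

Definition G_obj (al : trans) : trans * trans := (al, tcomp al al).
Definition G_mor (h : 'M[k]_8) : 'M[k]_8 := h.

End Defs.

From HB Require Import structures.
From mathcomp Require Import all_boot all_order all_algebra.
From Stdlib Require Import FunctionalExtensionality.
Set Implicit Arguments. Unset Strict Implicit. Unset Printing Implicit Defensive.
Import GRing.Theory.
Local Open Scope ring_scope.

(* Since G is the identity on morphisms, faithfulness, fullness and injectivity
   on objects are immediate, and functoriality amounts to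
   kappa_[h] a^2 kappa_[h]^-1 = (kappa_[h] a kappa_[h]^-1)^2.  The content is
   that (a, a^2) is a trialitarian pair.  If a = kappa_[h] for a similitude h,
   then a^3 = 1 gives a = kappa_[h]^-2 = kappa_[h^-2], and h^-2 is proper since
   det(h)^2 = mu(h)^8: a would be inner.  If a^2 = kappa_[h], then
   a = a^4 = kappa_[h^2].  If a^2 = a kappa_[h], cancelling a gives
   a = kappa_[h]; this needs kappa_[h] to preserve the points of PGO^+(n),
   which is checked after base change to fields, where conjugating a proper
   similitude by a similitude gives a proper similitude with the same
   multiplier. *)

Section SimilitudeMatrices.
Variable F : fieldType.

Lemma invmx_mul n (a b : 'M[F]_n) : a \in unitmx -> b \in unitmx ->
  invmx (a *m b) = invmx b *m invmx a.
Proof.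
move=> au bu; have abu : a *m b \in unitmx by rewrite unitmx_mul au bu.
have -> : invmx b *m invmx a = invmx (a *m b) *m ((a *m b) *m (invmx b *m invmx a)).
  by rewrite mulKmx.
by rewrite -(mulmxA a) (mulKVmx bu) mulmxV // mulmx1.
Qed.

Lemma sqr_det_similitude n (S h : 'M[F]_n) mu : \det S != 0 ->
  h^T *m S *m h = mu *: S -> \det h ^+ 2 = mu ^+ n.
Proof.
move=> dS /(congr1 determinant) /eqP.
by rewrite detZ !det_mulmx det_tr mulrAC -expr2 (inj_eq (mulIf dS)) => /eqP.
Qed.

Lemma similitude_mult_neq0 n (S h : 'M[F]_n.+1) mu : \det S != 0 ->
  h \in unitmx -> h^T *m S *m h = mu *: S -> mu != 0.
Proof.
move=> dS hu /(sqr_det_similitude dS) e.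
have : mu ^+ n.+1 != 0 by rewrite -e expf_neq0 // -unitfE -unitmxE.
by rewrite expf_eq0.
Qed.

Lemma similitude_invmx n (S h : 'M[F]_n) mu : h \in unitmx -> mu != 0 ->
  h^T *m S *m h = mu *: S -> (invmx h)^T *m S *m invmx h = mu^-1 *: S.
Proof.
move=> hu mu0 e.
have {2}<- : (invmx h)^T *m (h^T *m S *m h) *m invmx h = S.
  by rewrite !mulmxA -trmx_mul mulmxV // trmx1 mul1mx (mulmxK hu).
by rewrite e -scalemxAr -scalemxAl scalerA mulVf // scale1r.
Qed.

Lemma similitude_polar n (S h : 'M[F]_n) mu : h^T *m S *m h = mu *: S ->
  h^T *m (S + S^T) *m h = mu *: (S + S^T).
Proof.
move=> e; have eT : h^T *m S^T *m h = mu *: S^T.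
  by rewrite -[h in _ *m h]trmxK -!trmx_mul mulmxA e linearZ.
by rewrite mulmxDr mulmxDl e eT scalerDr.
Qed.

Lemma conj_similitude_mult n (T H g : 'M[F]_n) m nu :
  H \in unitmx -> m != 0 -> H^T *m T *m H = m *: T ->
  g^T *m T *m g = nu *: T ->
  (H *m g *m invmx H)^T *m T *m (H *m g *m invmx H) = nu *: T.
Proof.
move=> Hu m0 eH eg.
have -> : (H *m g *m invmx H)^T *m T *m (H *m g *m invmx H)
    = (invmx H)^T *m (g^T *m (H^T *m T *m H) *m g) *m invmx H.
  by rewrite !trmx_mul !mulmxA.
rewrite eH -scalemxAr -scalemxAl eg -!scalemxAr -!scalemxAl.
by rewrite (similitude_invmx Hu m0 eH) !scalerA mulrAC mulfV // mul1r.
Qed.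

Lemma invmx_mul_trmx_similitude n (B h : 'M[F]_n) mu :
  B \in unitmx -> h \in unitmx -> h^T *m B *m h = mu *: B ->
  invmx B *m h^T = mu *: (invmx h *m invmx B).
Proof.
move=> Bu hu e.
have -> : h^T = h^T *m B *m h *m invmx h *m invmx B by rewrite !mulmxK.
by rewrite e -!scalemxAl -scalemxAr !mulmxA mulVmx // mul1mx.
Qed.

Lemma trmx_invmx_mul_similitude n (B h : 'M[F]_n) mu :
  h \in unitmx -> mu != 0 -> h^T *m B *m h = mu *: B ->
  (invmx h)^T *m B = mu^-1 *: (B *m h).
Proof.
move=> hu mu0 e; rewrite scalemxAl -(similitude_invmx hu mu0 e).
by rewrite mulmxKV.
Qed.

End SimilitudeMatrices.

Section Conjugation.
Variable k : fieldType.
Implicit Types (S h : 'M[k]_8) (A : comAlgType k).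

Lemma map_mulmxV (R : pzRingType) (f : {rmorphism k -> R}) n (h : 'M[k]_n) :
  h \in unitmx -> map_mx f h *m map_mx f (invmx h) = 1%:M.
Proof. by move=> hu; rewrite -map_mxM mulmxV // map_mx1. Qed.

Lemma map_mulVmx (R : pzRingType) (f : {rmorphism k -> R}) n (h : 'M[k]_n) :
  h \in unitmx -> map_mx f (invmx h) *m map_mx f h = 1%:M.
Proof. by move=> hu; rewrite -map_mxM mulVmx // map_mx1. Qed.

Lemma kappaM A a b (phi : 'M[A]_8 -> 'M[A]_8) : a \in unitmx -> b \in unitmx ->
  kappa a (kappa b phi) = kappa (a *m b) phi.
Proof.
move=> au bu; apply: functional_extensionality => x.
by rewrite /kappa invmx_mul // !map_mxM !mulmxA.
Qed.

Lemma kappa1 A (phi : 'M[A]_8 -> 'M[A]_8) : kappa 1%:M phi = phi.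
Proof.
apply: functional_extensionality => x.
by rewrite /kappa invmx1 map_mx1 !mul1mx !mulmx1.
Qed.

Lemma kappaK A h (phi : 'M[A]_8 -> 'M[A]_8) :
  h \in unitmx -> kappa (invmx h) (kappa h phi) = phi.
Proof. by move=> hu; rewrite kappaM ?unitmx_inv // mulVmx // kappa1. Qed.

Lemma PGO_pt_conj S A (H Hi : 'M[A]_8) (phi : 'M[A]_8 -> 'M[A]_8) :
  H *m Hi = 1%:M -> Hi *m H = 1%:M ->
  (forall x, Hi *m adj_inv (polarInvA S A) (polarA S A) x *m H =
             adj_inv (polarInvA S A) (polarA S A) (Hi *m x *m H)) ->
  PGO_pt S phi -> PGO_pt S (fun x => H *m phi (Hi *m x *m H) *m Hi).
Proof.
move=> HHi HiH adjH [[ad sc] mul one [phi' c1 c2] adjc].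
have conjM (P Q : 'M[A]_8) (X Y : 'M[A]_8) : Q *m P = 1%:M ->
    P *m X *m Q *m (P *m Y *m Q) = P *m (X *m Y) *m Q.
  by move=> QP; rewrite -!mulmxA (mulmxA Q) QP mul1mx.
have conjK (P Q : 'M[A]_8) (X : 'M[A]_8) : Q *m P = 1%:M ->
    Q *m (P *m X *m Q) *m P = X.
  by move=> QP; rewrite !mulmxA QP mul1mx -mulmxA QP mulmx1.
split.
- split=> [x y|a x]; first by rewrite mulmxDr mulmxDl ad mulmxDr mulmxDl.
  by rewrite -scalemxAr -scalemxAl sc -scalemxAr -scalemxAl.
- by move=> x y; rewrite -conjM // mul conjM.
- by rewrite mulmx1 HiH one mulmx1 HHi.
- by exists (fun x => H *m phi' (Hi *m x *m H) *m Hi) => x;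
    rewrite conjK // ?c1 ?c2 conjK.
- move=> x; rewrite adjH adjc.
  have := adjH (H *m phi (Hi *m x *m H) *m Hi).
  by rewrite conjK // => <-; rewrite conjK.
Qed.

Lemma adj_inv_conj_similitude S h A (x : 'M[A]_8) :
  S + S^T \in unitmx -> similitude S h ->
  map_mx (in_alg A) (invmx h) *m adj_inv (polarInvA S A) (polarA S A) x
    *m map_mx (in_alg A) h =
  adj_inv (polarInvA S A) (polarA S A)
    (map_mx (in_alg A) (invmx h) *m x *m map_mx (in_alg A) h).
Proof.
move=> Bu [hu [mu /similitude_polar e]].
have mu0 : mu != 0 by apply: similitude_mult_neq0 hu e; rewrite -unitfE -unitmxE.
rewrite /adj_inv /polarA /polarInvA.
set f := in_alg A; set B := S + S^T.
have E1 : map_mx f (invmx B) *m map_mx f h^T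
    = f mu *: (map_mx f (invmx h) *m map_mx f (invmx B)).
  by rewrite -map_mxM (invmx_mul_trmx_similitude Bu hu e) map_mxZ map_mxM.
have E2 : map_mx f (invmx h)^T *m map_mx f B
    = f mu^-1 *: (map_mx f B *m map_mx f h).
  by rewrite -map_mxM (trmx_invmx_mul_similitude hu mu0 e) map_mxZ map_mxM.
rewrite !trmx_mul !map_trmx !mulmxA E1 -(mulmxA _ (map_mx f (invmx h)^T)) E2.
rewrite -!scalemxAl -!scalemxAr scalerA -rmorphM mulfV // rmorph1 scale1r.
by rewrite !mulmxA.
Qed.

Lemma kappa_PGO_pt S h A (phi : 'M[A]_8 -> 'M[A]_8) :
  S + S^T \in unitmx -> similitude S h -> PGO_pt S phi -> PGO_pt S (kappa h phi).
Proof.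
move=> Bu hs; have hu : h \in unitmx by case: hs.
apply: PGO_pt_conj; [exact: map_mulmxV | exact: map_mulVmx |].
by move=> x; apply: adj_inv_conj_similitude.
Qed.

End Conjugation.

Section BaseChange.

Lemma linear_mx_sum_delta (R : pzRingType) m n p q
    (phi : 'M[R]_(m, n) -> 'M[R]_(p, q)) :
  (forall x y, phi (x + y) = phi x + phi y) ->
  (forall (a : R) x, phi (a *: x) = a *: phi x) ->
  forall y, phi y = \sum_(i < m) \sum_(l < n) y i l *: phi (delta_mx i l).
Proof.
move=> ad sc y; have phi0 : phi 0 = 0 by rewrite -(scale0r 0) sc scale0r.
rewrite {1}(matrix_sum_delta y) (big_morph phi ad phi0); apply: eq_bigr => i _.
by rewrite (big_morph phi ad phi0); apply: eq_bigr => l _.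
Qed.

Variables (R R' : comNzRingType) (f : {rmorphism R -> R'}).

Lemma map_mx_base_change (phi : 'M[R]_8 -> 'M[R]_8) :
  (forall x y, phi (x + y) = phi x + phi y) ->
  (forall (a : R) x, phi (a *: x) = a *: phi x) ->
  forall y, map_mx f (phi y) = base_change f phi (map_mx f y).
Proof.
move=> ad sc y; rewrite (linear_mx_sum_delta ad sc) /base_change.
rewrite (big_morph _ (@map_mxD _ _ f 8 8) (map_mx0 f 8 8)); apply: eq_bigr => i _.
rewrite (big_morph _ (@map_mxD _ _ f 8 8) (map_mx0 f 8 8)); apply: eq_bigr => l _.
by rewrite map_mxZ mxE.
Qed.

Lemma base_change_conj (phi : 'M[R]_8 -> 'M[R]_8) (M N : 'M[R']_8) :
  (forall i l, map_mx f (phi (delta_mx i l)) = M *m delta_mx i l *m N) ->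
  forall x, base_change f phi x = M *m x *m N.
Proof.
move=> phi_delta x; rewrite /base_change.
rewrite (@linear_mx_sum_delta _ _ _ _ _ (fun y => M *m y *m N)) => [|y z|a y].
- by apply: eq_bigr => i _; apply: eq_bigr => l _; rewrite phi_delta.
- by rewrite mulmxDr mulmxDl.
by rewrite -scalemxAr -scalemxAl.
Qed.

End BaseChange.

Section KappaPGOplus.
Variable k : fieldType.
Implicit Types (S h : 'M[k]_8) (A : comAlgType k).

Lemma base_change_kappa A h (phi : 'M[A]_8 -> 'M[A]_8)
    (F : fieldType) (j : {rmorphism k -> F}) (f : {rmorphism A -> F})
    (g : 'M[F]_8) :
  h \in unitmx -> g \in unitmx -> (forall c : k, f c%:A = j c) ->
  (forall x y, phi (x + y) = phi x + phi y) ->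
  (forall (a : A) x, phi (a *: x) = a *: phi x) ->
  (forall x, base_change f phi x = g *m x *m invmx g) ->
  forall x, base_change f (kappa h phi) x =
    (map_mx j h *m g *m invmx (map_mx j h)) *m x
      *m invmx (map_mx j h *m g *m invmx (map_mx j h)).
Proof.
move=> hu gu fj ad sc phi_g; set g' := _ *m g *m _.
have fA (M : 'M[k]_8) : map_mx f (map_mx (in_alg A) M) = map_mx j M.
  by apply/matrixP => a b; rewrite !mxE fj.
have Hu : map_mx j h \in unitmx by rewrite map_unitmx.
have -> : invmx g' = map_mx j h *m invmx g *m invmx (map_mx j h).
  by rewrite !invmx_mul ?unitmx_mul ?Hu ?unitmx_inv // invmxK mulmxA.
apply: base_change_conj => a b.
rewrite /kappa !map_mxM !fA map_mx_base_change // !map_mxM fA map_delta_mx phi_g.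
by rewrite !fA /g' map_invmx !mulmxA.
Qed.

Lemma kappa_PGOplus_pt S h A (phi : 'M[A]_8 -> 'M[A]_8) :
  S + S^T \in unitmx -> similitude S h -> PGOplus_pt S phi ->
  PGOplus_pt S (kappa h phi).
Proof.
move=> Bu hs [pgo phi_pt]; split; first exact: kappa_PGO_pt.
move=> F j f fj; have [g [nu [gu eg dg phi_g]]] := phi_pt F j f fj.
have [hu [mu e]] := hs.
have mu0 : mu != 0.
  apply: similitude_mult_neq0 hu (similitude_polar e).
  by rewrite -unitfE -unitmxE.
have [[ad sc] _ _ _ _] := pgo.
set H := map_mx j h.
have Hu : H \in unitmx by rewrite map_unitmx.
have eH : H^T *m map_mx j S *m H = j mu *: map_mx j S.
  by rewrite map_trmx -!map_mxM e map_mxZ.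
exists (H *m g *m invmx H), nu; split.
- by rewrite !unitmx_mul Hu gu unitmx_inv.
- by apply: (conj_similitude_mult Hu _ eH eg); rewrite fmorph_eq0.
- by rewrite !det_mulmx det_inv mulrAC mulfV ?mul1r // -unitfE -unitmxE.
by move=> x; apply: base_change_kappa.
Qed.

End KappaPGOplus.

Section Triality.
Variables (k : fieldType) (S : 'M[k]_8).
Implicit Types (al be : trans k) (h : 'M[k]_8).

Lemma pfister_det_neq0 : is_3fold_pfister S -> \det S != 0.
Proof.
move=> [_ [a [b [c [P [a0 b0 c0 Pu ->]]]]]].
have dP : \det P != 0 by rewrite -unitfE -unitmxE.
rewrite !det_mulmx det_tr det_diag !mulf_neq0 //.
apply/prodf_neq0 => i _; rewrite mxE /pfister_entry.
by rewrite !mulf_neq0 //; case: ifP; rewrite ?oppr_eq0 ?oner_eq0.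
Qed.

Lemma pfister_polar_unit : (2%:R : k) != 0 -> is_3fold_pfister S ->
  S + S^T \in unitmx.
Proof.
move=> two pf; have [ST _] := pf.
rewrite ST -mulr2n -scaler_nat unitmxE detZ unitfE.
by rewrite mulf_neq0 ?expf_neq0 ?pfister_det_neq0.
Qed.

Lemma similitudeM (a b : 'M[k]_8) :
  similitude S a -> similitude S b -> similitude S (a *m b).
Proof.
move=> [au [mu ea]] [bu [nu eb]]; split; first by rewrite unitmx_mul au bu.
exists (nu * mu); rewrite trmx_mul !mulmxA -(mulmxA _ a^T) -(mulmxA _ _ a) ea.
by rewrite -scalemxAr -scalemxAl eb scalerA mulrC.
Qed.

Lemma proper_similitude_invmx_sqr h : \det S != 0 -> similitude S h ->
  proper_similitude S (invmx h *m invmx h).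
Proof.
move=> dS [hu [mu e]].
have mu0 : mu != 0 by exact: similitude_mult_neq0 dS hu e.
have ei := similitude_invmx hu mu0 e.
split; first by rewrite unitmx_mul unitmx_inv hu.
exists (mu^-1 * mu^-1); split.
  have -> : (invmx h *m invmx h)^T *m S *m (invmx h *m invmx h)
      = (invmx h)^T *m ((invmx h)^T *m S *m invmx h) *m invmx h.
    by rewrite trmx_mul !mulmxA.
  by rewrite ei -scalemxAr -scalemxAl ei scalerA.
rewrite det_mulmx det_inv -[LHS]expr2 exprVn (sqr_det_similitude dS e) -exprVn.
by rewrite -expr2 -exprM.
Qed.

Lemma is_aut_tcomp al be : is_aut S al -> is_aut S be -> is_aut S (tcomp al be).
Proof.
move=> [P1 P2 P3 P4 P5] [Q1 Q2 Q3 Q4 Q5]; split; rewrite /tcomp.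
- by move=> A phi hp; apply/P1/Q1.
- by move=> A phi psi hp hq; rewrite Q2 // P2 //; apply: Q1.
- by move=> A phi psi hp hq /P3 e; apply: Q3 => //; apply: e; apply: Q1.
- move=> A psi hq; have [phi1 [h1 <-]] := P4 A psi hq.
  by have [phi2 [h2 <-]] := Q4 A phi1 h1; exists phi2.
- by move=> A A' f hf phi hp; rewrite Q5 // P5 //; apply: Q1.
Qed.

Lemma teq_tconj_tcomp h (al al' be be' : trans k) : h \in unitmx ->
  (forall (A : comAlgType k) (phi : 'M[A]_8 -> 'M[A]_8),
     PGOplus_pt S phi -> PGOplus_pt S (be' A phi)) ->
  teq S (tconj h al) be -> teq S (tconj h al') be' ->
  teq S (tconj h (tcomp al al')) (tcomp be be').
Proof.
move=> hu be'_pt E E' A phi hp.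
rewrite /tcomp -[be A _]E; last exact: be'_pt.
by rewrite -E' // /tconj /tcomp kappaK.
Qed.

Lemma trialitarian_strongly_outer al : \det S != 0 -> trialitarian S al ->
  strongly_outer S al.
Proof.
move=> dS [[P1 _ _ _ _] not_inner cube _] [h [hs al_h]]; apply: not_inner.
have hu : h \in unitmx by case: hs.
exists (invmx h *m invmx h); split; first exact: proper_similitude_invmx_sqr.
move=> A phi hp.
have h3 : kappa h (kappa h (kappa h phi)) = phi.
  have hp1 := P1 A phi hp; have hp2 := P1 A _ hp1.
  rewrite -[RHS](cube A phi hp) /tcomp.
  by rewrite (al_h A _ hp2) (al_h A _ hp1) (al_h A _ hp).
by rewrite al_h // -kappaM ?unitmx_inv // -{2}h3 !kappaK.
Qed.

Lemma trialitarian_sqr_strongly_outer al : trialitarian S al ->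
  strongly_outer S al -> strongly_outer S (tcomp al al).
Proof.
move=> [[P1 _ _ _ _] _ cube _] al_so [h [hs al2_h]]; apply: al_so.
have hu : h \in unitmx by case: hs.
exists (h *m h); split; first exact: similitudeM.
move=> A phi hp; have hp1 := P1 A phi hp; have hp2 := P1 A _ hp1.
have e1 := al2_h A _ hp; have e2 := al2_h A _ hp2; rewrite /tcomp in e1 e2.
have e3 := cube A _ hp1; rewrite /tcomp /tid in e3.
by rewrite -e3 e2 e1 kappaM.
Qed.

Lemma trialitarian_sqr_notin_coset al : S + S^T \in unitmx ->
  trialitarian S al -> strongly_outer S al ->
  ~ (exists h, similitude S h /\ teq S (tcomp al al) (tcomp al (kappa h))).
Proof.
move=> Bu [[P1 _ P3 _ _] _ _ _] al_so [h [hs e]]; apply: al_so.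
exists h; split => // A phi hp.
by apply: P3 (e A phi hp) => //; [exact: P1 | exact: kappa_PGOplus_pt].
Qed.

End Triality.

Theorem mainTheorem14 (k : fieldType) (S : 'M[k]_8) :
  (2%:R : k) != 0 -> is_3fold_pfister S ->
  [/\
    (forall al, trialitarian S al ->
       is_aut S (G_obj al).1 /\ is_aut S (G_obj al).2) /\
    (forall al be h, trialitarian S al -> trialitarian S be ->
       hom_Tri_star S al be h -> hom_Aut S (G_obj al) (G_obj be) (G_mor h)),
    (forall al be h h', trialitarian S al -> trialitarian S be ->
       hom_Tri_star S al be h -> hom_Tri_star S al be h' ->
       same_class (G_mor h) (G_mor h') -> same_class h h'),
    (forall al be h, trialitarian S al -> trialitarian S be ->
       hom_Aut S (G_obj al) (G_obj be) h ->
       exists h', hom_Tri_star S al be h' /\ same_class (G_mor h') h),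
    (forall al be, trialitarian S al -> trialitarian S be ->
       teq S (G_obj al).1 (G_obj be).1 -> teq S (G_obj al).2 (G_obj be).2 ->
       teq S al be) &
    (forall al, trialitarian S al ->
       trialitarian_pair S (G_obj al).1 (G_obj al).2)].
Proof.
move=> two pf; have dS := pfister_det_neq0 pf.
have Bu := pfister_polar_unit two pf.
split=> //.
- split=> [al [al_aut _ _ _] | al be h _ [[be_pt _ _ _ _] _ _ _] [hs E]].
    by split=> //; apply: is_aut_tcomp.
  have hu : h \in unitmx by case: hs.
  by split=> //; apply: teq_tconj_tcomp.
- move=> al be h _ _ [hs E1 E2]; exists h; split=> //.
  by exists 1; rewrite scale1r oner_neq0.
move=> al tri; have al_so := trialitarian_strongly_outer dS tri.
have [al_aut _ _ _] := tri.
split=> //=; first exact: is_aut_tcomp.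
- exact: trialitarian_sqr_strongly_outer.
exact: trialitarian_sqr_notin_coset.
Qed.
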